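(* Let $q$ be a prime power and $n\ge 3$. If $\mathcal{L}$ is a Cameron-Liebler $(n-2)$-set of $\mathrm{AG}(n,q)$ with parameter $x$, then $\frac{x(x-1)}{2}\equiv 0 \pmod{q+1}$.
   Context: $\mathrm{AG}(n,q)$ is $\mathrm{PG}(n,q)$ with a hyperplane $\pi_\infty$ removed; affine $k$-spaces are $k$-dimensional projective subspaces not contained in $\pi_\infty$. With $A_n$ the incidence matrix of affine points versus affine $k$-spaces, a set $\mathcal{L}$ of affine $k$-spaces is a Cameron-Liebler $k$-set of $\mathrm{AG}(n,q)$ if its characteristic vector lies in the real row space $\mathrm{Im}(A_n^T)$; its parameter is $|\mathcal{L}|/\left[{n\atop k}\right]_q$, where $\left[{a\atop b}\right]_q=\frac{(q^a-1)\cdots(q^{a-b+1}-1)}{(q^b-1)\cdots(q-1)}$. *)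

From HB Require Import structures.
From mathcomp Require Import all_boot all_order all_algebra.
From mathcomp Require Import reals.
Set Implicit Arguments. Unset Strict Implicit. Unset Printing Implicit Defensive.
Import Order.TTheory GRing.Theory Num.Theory.
Local Open Scope ring_scope.

(* AG(n,q) is modelled as the vector space 'rV[F]_n, F a finite field with
   q = #|F| elements. *)
Definition affine_kspace (F : finFieldType) (n k : nat) (S : {set 'rV[F]_n}) : bool :=
  [exists v : 'rV[F]_n, exists W : 'M[F]_n,
     (\rank W == k)%N && (S == [set x | (x - v <= W)%MS])].

(* Cameron-Liebler k-set: a set L of affine k-spaces whose characteristic
   vector lies in the real row space Im(A_n^T) of the point / k-space
   incidence matrix A_n, i.e. chi_L = A_n^T c for some real vector c
   indexed by the points: chi_L(S) = sum_{p in S} c_p. *)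
Definition CL_kset (R : realType) (F : finFieldType) (n k : nat)
  (L : {set {set 'rV[F]_n}}) : Prop :=
  (forall S, S \in L -> affine_kspace k S) /\
  exists c : 'rV[F]_n -> R,
    forall S, affine_kspace k S -> ((S \in L)%:R : R) = \sum_(p in S) c p.

Definition gauss_binom (R : realType) (q a b : nat) : R :=
  \prod_(i < b) (((q ^ (a - i))%:R - 1) / ((q ^ i.+1)%:R - 1)).

Definition CL_param (R : realType) (F : finFieldType) (n k : nat)
  (L : {set {set 'rV[F]_n}}) : R :=
  (#|L|%:R) / gauss_binom R #|F| n k.

From HB Require Import structures.
From mathcomp Require Import all_boot all_order all_algebra.
From mathcomp Require Import reals.
From mathcomp Require Import ring zify.
Set Implicit Arguments. Unset Strict Implicit. Unset Printing Implicit Defensive.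
Import Order.TTheory GRing.Theory Num.Theory.
Local Open Scope ring_scope.

(* Counting incidences of points and affine (n-2)-spaces turns chi_L = A_n^T c
   into |L| = (sum_p c_p) [n, n-2]_q, so the parameter is x = sum_p c_p.  Push c
   forward along the projection of F^n onto its first three coordinates: the
   preimages of the affine lines of AG(3,q) are affine (n-2)-spaces, so every
   line sum of the pushforward f is 0 or 1.  Since a 0/1 value is its own
   square, summing the squared line sums over all lines with a fixed direction
   shows that, for any set D of directions closed under scaling,
     |D| (x - sum_Z f(Z)^2) = (q - 1) sum_(w in D) sum_Z f(Z) f(Z + w).
   Taking for D all directions, and the directions of the plane z = 0, and
   eliminating sum_Z f(Z)^2 gives x^2 - x = (q + 1) sum_h (x_h^2 - x_h), where
   x_h is the sum of f over the plane z = h.  As x_h counts the lines of L of a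
   fixed direction inside that plane, each x_h^2 - x_h is twice a binomial. *)

Lemma prod_pow_sub (q j k : nat) : (k <= j)%N ->
  (\prod_(i < k) (q ^ j - q ^ i))%N =
  (\prod_(i < k) q ^ i * \prod_(i < k) (q ^ (j - i) - 1))%N.
Proof.
move=> le_kj; rewrite -big_split; apply: eq_bigr => i _ /=.
by rewrite mulnBr muln1 -expnD subnKC // (leq_trans (ltnW (ltn_ord i))).
Qed.

Lemma gauss_binomE (R : realType) (q n k : nat) : (1 < q)%N -> (k <= n)%N ->
  gauss_binom R q n k * (\prod_(i < k) (q ^ k - q ^ i))%N%:R =
  (\prod_(i < k) (q ^ n - q ^ i))%N%:R.
Proof.
move=> q_gt1 le_kn; rewrite !prod_pow_sub // !natrM mulrCA; congr (_ * _).
rewrite (reindex_inj rev_ord_inj) /= /gauss_binom !natr_prod -big_split.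
apply: eq_bigr => i _ /=.
rewrite subKn // !natrB ?expn_gt0 ?(ltnW q_gt1) // divfK //.
by rewrite subr_eq0 pnatr_eq1 -(expn0 q) eqn_exp2l.
Qed.

Section LinearSubspaces.
Variable F : finFieldType.
Local Notation q := #|F|.

Lemma row_free_col_mx k n (v : 'rV[F]_n) (A : 'M[F]_(k, n)) :
  row_free (col_mx v A) = row_free A && ~~ (v <= A)%MS.
Proof.
rewrite /row_free -addsmxE.
have [le_A_vA] := mxrank_leqif_sup (addsmxSr v A).
rewrite addsmx_sub submx_refl andbT => <-.
have [le_vA _] := mxrank_adds_leqif v A.
have le_Ak := rank_leq_row A; have le_v1 := rank_leq_row v.
by apply/eqP/andP => [|[/eqP]]; lia.
Qed.

Lemma card_row_span k n (A : 'M[F]_(k, n)) :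
  row_free A -> #|[set v : 'rV_n | (v <= A)%MS]| = (q ^ k)%N.
Proof.
move=> freeA; have -> : [set v : 'rV_n | (v <= A)%MS] = [set u *m A | u : 'rV_k].
  by apply/setP => v; rewrite inE; apply/submxP/imsetP => [[u ->]|[u _ ->]]; exists u.
by rewrite card_imset ?card_mx ?mul1n //; apply: row_free_inj.
Qed.

Lemma card_row_free k n : (k <= n)%N ->
  #|[set A : 'M[F]_(k, n) | row_free A]| = (\prod_(i < k) (q ^ n - q ^ i))%N.
Proof.
elim: k => [_ | k IHk /ltnW-le_kn].
  rewrite big_ord0 -[RHS](card_mx F 0 n); apply: eq_card => A.
  by rewrite inE /row_free flatmx0 mxrank0.
have card_out (A : 'M[F]_(k, n)) :
    row_free A -> #|[set v : 'rV_n | ~~ (v <= A)%MS]| = (q ^ n - q ^ k)%N.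
  move=> freeA; rewrite -(card_row_span freeA) -[n in (q ^ n)%N]mul1n -(card_mx F 1 n).
  rewrite -(cardsC [set v : 'rV_n | (v <= A)%MS]) addKn.
  by apply: eq_card => v; rewrite !inE.
rewrite big_ord_recr /= -IHk // -sum_nat_const -sum1_card.
rewrite (reindex (fun x : 'M_(k, n) * 'rV_n => col_mx x.2 x.1 : 'M_(1 + k, n))) /=; last first.
  exists (fun M => (dsubmx M, usubmx M)) => [[A v] _ | M _] /=; last exact: vsubmxK.
  by rewrite col_mxKu col_mxKd.
under [RHS]eq_bigr => A /[!inE] freeA do rewrite -(card_out A freeA) -sum1_card.
by rewrite pair_big_dep; apply: eq_bigl => -[A v]; rewrite !inE row_free_col_mx.
Qed.

Definition span_set m n (A : 'M[F]_(m, n)) : {set 'rV[F]_n} := [set x | (x <= A)%MS].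

Lemma eq_span_set m1 m2 n (A : 'M[F]_(m1, n)) (B : 'M[F]_(m2, n)) :
  (span_set A == span_set B) = (A == B)%MS.
Proof.
apply/eqP/eqmxP => [eqAB | eqAB]; last by apply/setP => x; rewrite !inE eqAB.
apply/eqmxP/andP; split; apply/row_subP => i.
  have : row i A \in span_set A by rewrite inE row_sub.
  by rewrite eqAB inE.
have : row i B \in span_set B by rewrite inE row_sub.
by rewrite -eqAB inE.
Qed.

Definition linear_kspaces k n : {set {set 'rV[F]_n}} :=
  [set span_set W | W in [set W : 'M[F]_n | \rank W == k]].

Lemma card_row_free_span k n (W : 'M[F]_n) : \rank W = k ->
  #|[set A : 'M[F]_(k, n) | row_free A && (span_set A == span_set W)]| =
  #|[set M : 'M[F]_k | row_free M]|.
Proof.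
move=> <-; set B := row_base W.
have -> : [set A : 'M_(\rank W, n) | row_free A && (span_set A == span_set W)] =
          [set M *m B | M in [set M : 'M_(\rank W) | row_free M]].
  apply/setP => A; rewrite inE eq_span_set.
  apply/andP/imsetP => [[freeA /andP[sAW _]] | [M /[!inE] freeM ->]].
    have sAB : (A <= B)%MS by rewrite eq_row_base.
    exists (A *m pinvmx B); last by rewrite mulmxKpV.
    by rewrite inE /row_free -(mxrankMfree _ (row_base_free W)) mulmxKpV.
  split; first by rewrite /row_free mxrankMfree ?row_base_free.
  by rewrite !(eqmxMfull B freeM); apply/eqmxP; apply: eq_row_base.
by rewrite card_in_imset // => M1 M2 _ _; apply: (row_free_inj (row_base_free W)).
Qed.

Lemma card_row_free_kspaces k n :
  #|[set A : 'M[F]_(k, n) | row_free A]| =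
  (#|linear_kspaces k n| * #|[set M : 'M[F]_k | row_free M]|)%N.
Proof.
rewrite -sum1_card (partition_big (@span_set k n) (mem (linear_kspaces k n))) /=; last first.
  move=> A /[!inE] freeA; apply/imsetP; exists <<A>>%MS.
    by rewrite inE mxrank_gen (eqP freeA).
  by apply/eqP; rewrite eq_span_set; apply/eqmxP/eqmx_sym/genmxE.
rewrite -sum_nat_const; apply: eq_bigr => _ /imsetP[W /[!inE] /eqP rW ->].
by rewrite -(card_row_free_span rW) -sum1_card; apply: eq_bigl => A; rewrite !inE.
Qed.

Lemma card_linear_kspaces (R : realType) k n : (k <= n)%N ->
  #|linear_kspaces k n|%:R = gauss_binom R #|F| n k.
Proof.
move=> le_kn; have q_gt1 := card_finNzRing_gt1 F.
have nz_GLk : (#|[set M : 'M[F]_k | row_free M]|%:R : R) != 0.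
  rewrite pnatr_eq0 cards_eq0; apply/set0Pn; exists 1%:M.
  by rewrite inE row_free_unit unitmx1.
apply: (mulIf nz_GLk); rewrite -natrM -card_row_free_kspaces.
by rewrite !card_row_free // gauss_binomE.
Qed.
End LinearSubspaces.

Section AffineSpaces.
Variables (F : finFieldType) (k n : nat).

Lemma affine_base_change m (W : 'M[F]_(m, n)) (v p x : 'rV[F]_n) :
  (p - v <= W)%MS -> (x - p <= W)%MS = (x - v <= W)%MS.
Proof.
move=> sW; have -> : x - v = (x - p) + (p - v) by rewrite addrA subrK.
apply/idP/idP => [sxW | sxvW]; first exact: addmx_sub.
by rewrite -(addrK (p - v) (x - p)) addmx_sub // eqmx_opp.
Qed.

Lemma affine_kspaces_through (p : 'rV[F]_n) :
  [set S | affine_kspace k S & p \in S] =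
  [set [set x | x - p \in U] | U : {set 'rV[F]_n} in linear_kspaces F k n].
Proof.
apply/setP => S; rewrite inE; apply/andP/imsetP.
  move=> [/existsP[v /existsP[W /andP[rW /eqP->]]]] /[!inE] pv.
  exists (span_set W); first by apply/imsetP; exists W; rewrite ?inE.
  by apply/setP => x; rewrite !inE (affine_base_change _ pv).
move=> [_ /imsetP[W /[!inE] rW ->] ->]; split; last by rewrite !inE subrr sub0mx.
apply/existsP; exists p; apply/existsP; exists W; rewrite rW.
by apply/eqP/setP => x; rewrite !inE.
Qed.

Lemma card_affine_kspaces_through (p : 'rV[F]_n) :
  #|[set S | affine_kspace k S & p \in S]| = #|linear_kspaces F k n|.
Proof.
rewrite affine_kspaces_through card_in_imset // => U1 U2 _ _ eqU.
apply/setP => x; have := congr1 (fun S : {set 'rV[F]_n} => x + p \in S) eqU.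
by rewrite !inE addrK.
Qed.

Variable R : numFieldType.
Variables (L : {set {set 'rV[F]_n}}) (c : 'rV[F]_n -> R).
Hypothesis L_affine : forall S, S \in L -> affine_kspace k S.
Hypothesis L_char : forall S, affine_kspace k S -> ((S \in L)%:R : R) = \sum_(p in S) c p.

Lemma card_CL_kset : #|L|%:R = (\sum_p c p) * #|linear_kspaces F k n|%:R.
Proof.
have -> : #|L| = (\sum_(S | affine_kspace k S) (S \in L))%N.
  rewrite -sum1_card big_mkcond [RHS]big_mkcond /=; apply: eq_bigr => S _.
  by case: ifP => [/L_affine -> // | _]; case: ifP.
rewrite natr_sum (eq_bigr _ L_char) (exchange_big_dep xpredT) //= mulr_suml.
apply: eq_bigr => p _; rewrite sumr_const -(card_affine_kspaces_through p) mulr_natr.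
by congr (_ *+ _); apply: eq_card => S; rewrite inE.
Qed.
End AffineSpaces.

Lemma CL_param_sum (R : realType) (F : finFieldType) k n (L : {set {set 'rV[F]_n}})
    (c : 'rV[F]_n -> R) : (k <= n)%N ->
  (forall S, S \in L -> affine_kspace k S) ->
  (forall S, affine_kspace k S -> ((S \in L)%:R : R) = \sum_(p in S) c p) ->
  CL_param R k L = \sum_p c p.
Proof.
move=> le_kn L_affine L_char; rewrite /CL_param (card_CL_kset L_affine L_char).
rewrite -card_linear_kspaces // mulfK // pnatr_eq0 cards_eq0; apply/set0Pn.
exists (span_set (pid_mx k : 'M[F]_n)).
by apply/imsetP; exists (pid_mx k); rewrite // inE rank_pid_mx.
Qed.

Section LineSums.
Variables (F : finFieldType) (r : nat) (R : numFieldType).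
Implicit Types (f g : 'rV[F]_r -> R) (P d w : 'rV[F]_r).

Definition line_sum f P d : R := \sum_t f (P + t *: d).

Definition autocorr f w : R := \sum_Z f Z * f (Z + w).

Definition slice_sum f (j : 'I_r) (h : F) : R := \sum_(Z : 'rV[F]_r | Z 0 j == h) f Z.

Lemma sum_line_sum f d : \sum_P line_sum f P d = #|F|%:R * \sum_Z f Z.
Proof.
rewrite exchange_big /= (eq_bigr (fun=> \sum_Z f Z)) => [|t _].
  by rewrite sumr_const mulr_natl.
by rewrite [RHS](reindex_inj (addIr (t *: d))).
Qed.

Lemma sum_line_sum_sqr f d :
  \sum_P line_sum f P d ^+ 2 = #|F|%:R * \sum_a autocorr f (a *: d).
Proof.
under eq_bigr do rewrite expr2 /line_sum big_distrlr /=.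
rewrite exchange_big /= (eq_bigr (fun=> \sum_a autocorr f (a *: d))) => [|t _].
  by rewrite sumr_const mulr_natl.
rewrite exchange_big /= [RHS](reindex_inj (addIr (- t))) /=; apply: eq_bigr => s _.
rewrite (reindex_inj (addIr (- (t *: d)))) /=; apply: eq_bigr => Z _.
by rewrite subrK scalerBl addrA addrAC.
Qed.

Lemma sum_eq_autocorr_line f d : (forall P, line_sum f P d ^+ 2 = line_sum f P d) ->
  \sum_Z f Z = \sum_a autocorr f (a *: d).
Proof.
move=> idem; have q_neq0 : (#|F|%:R : R) != 0.
  by rewrite pnatr_eq0 -lt0n; apply/card_gt0P; exists 0.
apply: (mulfI q_neq0); rewrite -(sum_line_sum f d) -sum_line_sum_sqr.
by apply: eq_bigr => P _; rewrite idem.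
Qed.

Lemma sum_scale_directions g (D : pred 'rV[F]_r) :
  (forall a d, a != 0 -> D (a *: d) = D d) ->
  \sum_(d | D d) \sum_(a | a != 0) g (a *: d) = #|F|.-1%:R * \sum_(w | D w) g w.
Proof.
move=> D_scale; rewrite exchange_big /=.
rewrite (eq_bigr (fun=> \sum_(w | D w) g w)) => [|a a_neq0].
  by rewrite sumr_const cardC1 mulr_natl.
by rewrite [RHS](reindex_inj (scalerI a_neq0)); apply: eq_bigl => d; rewrite /= D_scale.
Qed.

Lemma sum_autocorr_directions f (D : pred 'rV[F]_r) :
  (forall a d, a != 0 -> D (a *: d) = D d) ->
  (forall P d, D d -> line_sum f P d ^+ 2 = line_sum f P d) ->
  #|D|%:R * (\sum_Z f Z - autocorr f 0) = #|F|.-1%:R * \sum_(w | D w) autocorr f w.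
Proof.
move=> D_scale D_lines; rewrite -sum_scale_directions //.
rewrite (_ : _ * _ = \sum_(d | D d) (\sum_Z f Z - autocorr f 0)); last first.
  by rewrite sumr_const mulr_natl.
apply: eq_bigr => d Dd; rewrite (sum_eq_autocorr_line (fun P => D_lines P d Dd)) (bigD1 0) //=.
by rewrite scale0r addrAC subrr add0r.
Qed.

Lemma sum_autocorr f : \sum_w autocorr f w = (\sum_Z f Z) ^+ 2.
Proof.
rewrite exchange_big /= expr2 mulr_suml; apply: eq_bigr => Z _.
by rewrite -mulr_sumr [in RHS](reindex_inj (addrI Z)).
Qed.

Lemma sum_slice_sum f j : \sum_h slice_sum f j h = \sum_Z f Z.
Proof. by rewrite [RHS](partition_big (fun Z : 'rV[F]_r => Z 0 j) xpredT). Qed.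

Lemma sum_autocorr_coord_hyperplane f j :
  \sum_(w : 'rV[F]_r | w 0 j == 0) autocorr f w = \sum_h slice_sum f j h ^+ 2.
Proof.
rewrite exchange_big /= (partition_big (fun Z : 'rV[F]_r => Z 0 j) xpredT) //=.
apply: eq_bigr => h _; rewrite expr2 mulr_suml; apply: eq_bigr => Z /eqP Zj.
rewrite -mulr_sumr; congr (_ * _); rewrite /slice_sum [RHS](reindex_inj (addrI Z)) /=.
by apply: eq_bigl => w; rewrite mxE -Zj -{2}[Z 0 j]addr0 (inj_eq (addrI _)).
Qed.

Lemma sum_affine_line g P d : d != 0 ->
  \sum_(Z | (Z - P <= d)%MS) g Z = line_sum g P d.
Proof.
move=> d_neq0; have inj_line : injective (fun t : F => P + t *: d).
  move=> s t /addrI/eqP; rewrite -subr_eq0 -scalerBl scaler_eq0 (negPf d_neq0) orbF.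
  by rewrite subr_eq0 => /eqP.
transitivity (\sum_(Z in [set P + t *: d | t : F]) g Z).
  apply: eq_bigl => Z; apply/sub_rVP/imsetP => [[t eqZ] | [t _ ->]].
    by exists t; rewrite // -eqZ addrC subrK.
  by exists t; rewrite addrC addKr.
by rewrite big_imset /=; [apply: eq_bigl => t; rewrite inE | apply: in2W].
Qed.

Lemma sum_over_parallel_lines g (i : 'I_r) :
  \sum_Z g Z = \sum_(P : 'rV[F]_r | P 0 i == 0) line_sum g P (delta_mx 0 i).
Proof.
rewrite exchange_big /= (partition_big (fun Z : 'rV[F]_r => Z 0 i) xpredT) //=.
apply: eq_bigr => t _; rewrite (reindex_inj (addIr (t *: delta_mx 0 i))) /=.
by apply: eq_bigl => P; rewrite !mxE !eqxx /= mulr1 -{2}[t]add0r (inj_eq (addIr t)).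
Qed.
End LineSums.

Section Counting.
Variable F : finFieldType.

Lemma card_nonzero_rV r : #|[pred d : 'rV[F]_r | d != 0]| = (#|F| ^ r).-1.
Proof.
rewrite -[r in (_ ^ r)%N]mul1n -(card_mx F 1 r) -(cardC1 0).
by apply: eq_card => d; rewrite !inE.
Qed.

Lemma card_coord_hyperplane r (j : 'I_r.+1) :
  #|[pred d : 'rV[F]_r.+1 | d 0 j == 0]| = (#|F| ^ r)%N.
Proof.
have q_gt0 : (0 < #|F|)%N by apply/card_gt0P; exists 0.
have card_rV : #|{: 'rV[F]_r.+1}| = (#|F| ^ r.+1)%N by rewrite card_mx mul1n.
apply/eqP; rewrite -(eqn_pmul2l q_gt0) -expnS -card_rV.
rewrite -[#|'rV_r.+1|]sum1_card (partition_big (fun d : 'rV[F]_r.+1 => d 0 j) xpredT) //=.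
rewrite -sum_nat_const; apply/eqP; apply: eq_bigr => h _.
rewrite -sum1_card [RHS](reindex_inj (addIr (h *: delta_mx 0 j))) /=.
by apply: eq_bigl => d; rewrite !inE !mxE !eqxx /= mulr1 -{2}[h]add0r (inj_eq (addIr h)).
Qed.

Lemma card_nonzero_coord_hyperplane r (j : 'I_r.+1) :
  #|[pred d : 'rV[F]_r.+1 | (d != 0) && (d 0 j == 0)]| = (#|F| ^ r).-1.
Proof.
rewrite -(card_coord_hyperplane j) [in RHS](cardD1 0) inE mxE eqxx /=.
by apply: eq_card => d; rewrite !inE.
Qed.
End Counting.

Section Cylinders.
Variables (F : finFieldType) (r m : nat).

Definition cylinder (P d : 'rV[F]_r) : {set 'rV[F]_(r + m)} :=
  [set y | (lsubmx y - P <= d)%MS].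

Lemma submx_block_line (d : 'rV[F]_r) (u : 'rV[F]_(r + m)) :
  (u <= block_mx d 0 0 (1%:M : 'M_m))%MS = (lsubmx u <= d)%MS.
Proof.
apply/submxP/idP => [[z ->] | /submxP[a eq_u]].
  by rewrite -[z]hsubmxK mul_row_block !mulmx0 addr0 row_mxKl submxMl.
exists (row_mx a (rsubmx u)).
by rewrite mul_row_block !mulmx0 addr0 add0r mulmx1 -eq_u hsubmxK.
Qed.

Lemma cylinder_affine P d : d != 0 -> affine_kspace m.+1 (cylinder P d).
Proof.
move=> d_neq0; apply/existsP; exists (row_mx P 0); apply/existsP.
exists <<block_mx d 0 0 (1%:M : 'M_m)>>%MS.
rewrite mxrank_gen rank_diag_block_mx rank_rV d_neq0 mxrank1 eqxx /=.
by apply/eqP/setP => y; rewrite !inE genmxE submx_block_line linearB /= row_mxKl.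
Qed.

Variable R : numFieldType.

Definition pushforward (c : 'rV[F]_(r + m) -> R) (Z : 'rV[F]_r) : R :=
  \sum_(y | lsubmx y == Z) c y.

Lemma sum_pushforward c : \sum_Z pushforward c Z = \sum_y c y.
Proof. by rewrite [RHS](partition_big (fun y : 'rV[F]_(r + m) => lsubmx y) xpredT). Qed.

Lemma sum_cylinder c P d : d != 0 ->
  \sum_(y in cylinder P d) c y = line_sum (pushforward c) P d.
Proof.
move=> d_neq0; rewrite -sum_affine_line //.
rewrite (partition_big (fun y : 'rV[F]_(r + m) => lsubmx y) (fun Z => (Z - P <= d)%MS)).
  apply: eq_bigr => Z sZ; apply: eq_bigl => y; rewrite inE.
  by case: eqP => [-> | _]; rewrite ?sZ ?andbF.
by move=> y; rewrite inE.
Qed.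

Lemma line_sum_pushforward (L : {set {set 'rV[F]_(r + m)}}) c :
  (forall S, affine_kspace m.+1 S -> ((S \in L)%:R : R) = \sum_(p in S) c p) ->
  forall P d, d != 0 -> line_sum (pushforward c) P d = (cylinder P d \in L)%:R.
Proof. by move=> L_char P d d_neq0; rewrite L_char ?cylinder_affine // sum_cylinder. Qed.
End Cylinders.

Lemma natr_pred (R : nzRingType) k : (0 < k)%N -> k.-1%:R = k%:R - 1 :> R.
Proof. by move=> k_gt0; rewrite -{2}(prednK k_gt0) -natr1 addrK. Qed.

Lemma natr_sqr_sub (R : nzRingType) (n : nat) : (n%:R : R) ^+ 2 - n%:R = 2 * 'C(n, 2)%:R.
Proof.
case: n => [|n]; first by rewrite expr0n subrr bin0n mulr0.
rewrite -natrM -mul_bin_diag bin1 natrM expr2 -[X in _ - X]mulr1 -mulrBr.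
by rewrite mulrSr addrK.
Qed.

Section Divisibility.
Variables (F : finFieldType) (R : archiNumFieldType) (f : 'rV[F]_3 -> R).
Hypothesis line_sum_idem :
  forall P d, d != 0 -> line_sum f P d ^+ 2 = line_sum f P d.

Local Notation q := (#|F|%:R : R).
Local Notation x := (\sum_Z f Z).

Lemma all_directions_identity :
  (q ^+ 3 - 1) * (x - autocorr f 0) = (q - 1) * (x ^+ 2 - autocorr f 0).
Proof.
have scale_nz a (d : 'rV[F]_3) : a != 0 -> (a *: d != 0) = (d != 0).
  by move=> a_nz; rewrite scaler_eq0 (negPf a_nz).
have := sum_autocorr_directions (D := [pred d : 'rV[F]_3 | d != 0]) scale_nz line_sum_idem.
rewrite card_nonzero_rV /= -sum_autocorr [X in _ = _ * (X - _)](bigD1 0) //=.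
rewrite addrAC subrr add0r.
by rewrite !natr_pred ?expn_gt0 ?(ltnW (card_finNzRing_gt1 F)) // natrX => ->.
Qed.

Lemma plane_directions_identity (j : 'I_3) :
  (q ^+ 2 - 1) * (x - autocorr f 0) =
  (q - 1) * (\sum_h slice_sum f j h ^+ 2 - autocorr f 0).
Proof.
have plane_scale a (d : 'rV[F]_3) : a != 0 ->
    ((a *: d != 0) && ((a *: d) 0 j == 0)) = ((d != 0) && (d 0 j == 0)).
  by move=> a_nz; rewrite scaler_eq0 mxE mulf_eq0 (negPf a_nz).
have plane_lines P (d : 'rV[F]_3) :
    (d != 0) && (d 0 j == 0) -> line_sum f P d ^+ 2 = line_sum f P d.
  by case/andP => d_nz _; apply: line_sum_idem.
have := sum_autocorr_directions
  (D := [pred d : 'rV[F]_3 | (d != 0) && (d 0 j == 0)]) plane_scale plane_lines.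
rewrite card_nonzero_coord_hyperplane /= -sum_autocorr_coord_hyperplane.
rewrite [X in _ = _ * (X - _)](bigD1 0) ?mxE //= addrAC subrr add0r.
rewrite (eq_bigl _ _ (fun w => andbC _ _)).
by rewrite !natr_pred ?expn_gt0 ?(ltnW (card_finNzRing_gt1 F)) // natrX => ->.
Qed.

Lemma sqr_sub_sum_slices (j : 'I_3) :
  x ^+ 2 - x = (#|F|.+1)%:R * (\sum_h slice_sum f j h ^+ 2 - x).
Proof.
have all_dirs := all_directions_identity.
have plane_dirs := plane_directions_identity j.
set Q := autocorr f 0 in all_dirs plane_dirs.
set X := \sum_h slice_sum f j h ^+ 2 in plane_dirs *.
have q1_nz : q - 1 != 0 by rewrite subr_eq0 pnatr_eq1 gtn_eqF ?card_finNzRing_gt1.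
apply: (mulfI q1_nz); rewrite -natr1.
have -> : (q - 1) * (x ^+ 2 - x) = (q - 1) * (x ^+ 2 - Q) - (q - 1) * (x - Q) by ring.
have -> : (q - 1) * ((q + 1) * (X - x)) =
          (q + 1) * ((q - 1) * (X - Q)) - (q ^+ 2 - 1) * (x - Q) by ring.
by rewrite -all_dirs -plane_dirs; ring.
Qed.

Lemma line_sum_nat P d : d != 0 -> line_sum f P d \is a Num.nat.
Proof.
move=> d_nz; have : line_sum f P d * (line_sum f P d - 1) = 0.
  by rewrite mulrBr mulr1 -expr2 line_sum_idem // subrr.
by move/eqP; rewrite mulf_eq0 subr_eq0 => /orP[] /eqP ->; rewrite ?rpred0 ?rpred1.
Qed.

Lemma slice_sum_nat (i j : 'I_3) h : i != j -> slice_sum f j h \is a Num.nat.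
Proof.
move=> ij; rewrite /slice_sum big_mkcond (sum_over_parallel_lines _ i) /=.
apply: rpred_sum => P _; rewrite /line_sum.
have slice_const t : (P + t *: delta_mx 0 i) 0 j = P 0 j.
  by rewrite !mxE eqxx eq_sym (negPf ij) mulr0 addr0.
under eq_bigr do rewrite slice_const.
case: eqP => _; last by rewrite big1_eq rpred0.
apply: line_sum_nat; apply/eqP => /matrixP/(_ 0 i).
by rewrite !mxE !eqxx => /eqP; rewrite oner_eq0.
Qed.

Lemma binom2_sum_divisible :
  exists t : nat, x * (x - 1) / 2 = (#|F|.+1)%:R * t%:R.
Proof.
pose j : 'I_3 := ord_max; pose N h := Num.truncn (slice_sum f j h).
have sliceE h : slice_sum f j h = (N h)%:R.
  by rewrite truncnK //; apply: (slice_sum_nat (i := ord0)).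
exists (\sum_h 'C(N h, 2))%N.
have two_nz : (2 : R) != 0 by rewrite pnatr_eq0.
apply: (mulIf two_nz); rewrite divfK // mulrBr mulr1 -expr2 (sqr_sub_sum_slices j).
rewrite -(sum_slice_sum f j) -sumrB natr_sum -mulrA mulr_suml; congr (_ * _).
by apply: eq_bigr => h _; rewrite sliceE natr_sqr_sub mulrC.
Qed.
End Divisibility.

Theorem theorem6p15 (R : realType) (F : finFieldType) (n : nat)
  (L : {set {set 'rV[F]_n}}) :
  (3 <= n)%N -> CL_kset R (n - 2) L ->
  exists t : int,
    CL_param R (n - 2) L * (CL_param R (n - 2) L - 1) / 2
      = (#|F|.+1)%:R * t%:~R.
Proof.
case: n L => [|[|[|m]]] L // _ [L_affine [c L_char]].
pose f := pushforward (r := 3) (m := m) c.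
have line_sum_idem P d : d != 0 -> line_sum f P d ^+ 2 = line_sum f P d.
  move=> d_nz; rewrite (line_sum_pushforward (r := 3) (m := m) L_char) //.
  by case: (_ \in L); rewrite ?expr1n ?expr0n.
have [t eq_t] := binom2_sum_divisible line_sum_idem.
rewrite /f sum_pushforward in eq_t.
by exists t; rewrite (CL_param_sum _ L_affine L_char) ?leq_subr.
Qed.
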